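(* Let $p>2$ be a prime and $m\geq3$ an integer with $\gcd(p,m)=1$. Let $u$ be the multiplicative order of $p$ modulo $2m$. Let $\zeta_4$ and $\zeta_{2m}$ be a primitive $4$-th and a primitive $2m$-th root of unity, respectively, in an algebraic closure of $\mathbb{Z}_p$, let $s$ be an integer with $\gcd(s,m)=1$, and let $\delta$ be the degree of the minimal polynomial of $\zeta_4(\zeta_{2m}^s+\zeta_{2m}^{-s})$ over $\mathbb{Z}_p$. Then: - $\delta=u/2$ if ($p\equiv1\pmod4$, $u$ even, and $p^{u/2}\equiv-1\pmod{2m}$), or ($p\equiv3\pmod4$, $u\equiv0\pmod4$, and $p^{u/2}\equiv-1\pmod{2m}$), or ($p\equiv3\pmod4$, $u\equiv2\pmod4$, and $p^{u/2}\equiv m\pm1\pmod{2m}$); - $\delta=u$ if ($p\equiv1\pmod4$, $u$ even, and $p^{u/2}\not\equiv-1\pmod{2m}$), or ($p\equiv1\pmod4$ and $u$ odd), or ($p\equiv3\pmod4$, $u\equiv0\pmod4$, and $p^{u/2}\not\equiv-1\pmod{2m}$), or ($p\equiv3\pmod4$, $u\equiv2\pmod4$, and $p^{u/2}\not\equiv m\pm1\pmod{2m}$); - $\delta=2u$ if $p\equiv3\pmod4$ and $u$ is odd.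
   Context: $\mathbb{Z}_p$ denotes the field with $p$ elements. (For orientation: the elements $\zeta_4(\zeta_{2m}^s+\zeta_{2m}^{-s})$ with $1\le s\le m$, $\gcd(s,m)=1$, are the roots of the reduction modulo $p$ of the fibotomic polynomial $\Psi_m(x)=\prod_{1\le s\le m,\ \gcd(s,m)=1}(x-2i\cos(\pi s/m))$.) *)

From HB Require Import structures.
From mathcomp Require Import all_boot all_order all_algebra all_field.
Set Implicit Arguments. Unset Strict Implicit. Unset Printing Implicit Defensive.
Import GRing.Theory.
Local Open Scope ring_scope.

Definition is_mult_order (u a n : nat) : Prop :=
  [/\ (0 < u)%N, (a ^ u = 1 %[mod n])%N &
      forall k : nat, (0 < k)%N -> (a ^ k = 1 %[mod n])%N -> (u <= k)%N].

(* degree of the minimal polynomial of x over the base field F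
   (the prime subfield 1 of the extension L) *)
Definition minpoly_degree (F : fieldType) (L : fieldExtType F) (x : L) : nat :=
  adjoin_degree 1%AS x.

From HB Require Import structures.
From mathcomp Require Import all_boot all_order all_algebra all_field.
From mathcomp Require Import ring zify.
Import GRing.Theory.
Local Open Scope ring_scope.

(* 1. The degree of any x in L over F_p is the least d > 0 with              *)
(*    x ^ (p ^ d) = x: Fermat's little theorem in F_p(x) gives one inequality *)
(*    and counting roots of X^(p^d) - X in F_p(x) gives the other.           *)
(* 2. Up to replacing z4 by -z4, x = z4 (w + w^-1) with w a primitive 2m-th  *)
(*    root of unity; for q an odd power of p, x ^ q = x holds iff            *)
(*    q = 1 (mod 4) and q = +-1 (mod 2m), or q = 3 (mod 4) and q = m +- 1    *)
(*    (mod 2m) (predicate stab_mod).                                          *)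
(* 3. Every d > 0 with stab_mod (p ^ d) m has u | 2d, u the order of p mod   *)
(*    2m, so the least such d is u/2, u or 2u; which one is decided by       *)
(*    p mod 4, u mod 4 and p ^ (u/2) mod 2m, giving the three cases.         *)

Definition least_pos (P : nat -> Prop) (T : nat) : Prop :=
  [/\ (0 < T)%N, P T & forall d, (0 < d)%N -> P d -> (T <= d)%N].

Lemma least_pos_unique (P Q : nat -> Prop) (T T' : nat) :
  (forall d, P d <-> Q d) -> least_pos P T -> least_pos Q T' -> T = T'.
Proof.
move=> PQ [T_gt0 PT minT] [T'_gt0 QT' minT'].
by apply/eqP; rewrite eqn_leq minT ?minT' //; apply/PQ.
Qed.

Lemma dvdn_lt_double {u n : nat} :
  (0 < n)%N -> (n < 2 * u)%N -> (u %| n)%N -> n = u.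
Proof.
move=> n_gt0 n_lt /dvdnP [k def_n]; rewrite def_n in n_gt0 n_lt *.
have u_gt0 : (0 < u)%N by case: u {def_n n_lt} n_gt0 => //; rewrite muln0.
have : (k < 2)%N by rewrite -(ltn_pmul2r u_gt0).
by case: k n_gt0 {def_n n_lt} => [|[|]] //=; rewrite mul1n.
Qed.

Section LeastCandidates.
Variables (P : nat -> Prop) (u : nat).
Hypotheses (u_gt0 : (0 < u)%N)
  (P_dvd : forall {d}, (0 < d)%N -> P d -> (u %| 2 * d)%N).

Lemma least_half : ~~ odd u -> P (u %/ 2) -> least_pos P (u %/ 2).
Proof.
move=> u_even Pu; split=> [|//|d d_gt0 Pd]; first lia.
have : (u <= 2 * d)%N by apply: dvdn_leq (P_dvd d_gt0 Pd); lia.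
lia.
Qed.

Lemma least_full : P u -> (forall d, (2 * d)%N = u -> ~ P d) -> least_pos P u.
Proof.
move=> Pu notP_half; split=> // d d_gt0 Pd; rewrite leqNgt; apply/negP=> d_lt.
by apply: (notP_half d) => //; apply: dvdn_lt_double (P_dvd d_gt0 Pd); lia.
Qed.

Lemma least_double : odd u -> P (2 * u)%N -> ~ P u -> least_pos P (2 * u).
Proof.
move=> u_odd P2u notPu; split=> //; first lia.
move=> d d_gt0 Pd; rewrite leqNgt; apply/negP=> d_lt.
have u_dvd_d : (u %| d)%N by rewrite -(@Gauss_dvdr u 2) ?coprimen2 ?P_dvd.
by apply: notPu; rewrite -(dvdn_lt_double d_gt0 d_lt u_dvd_d).
Qed.

End LeastCandidates.

Lemma expn_mod_order {a n u : nat} (k : nat) :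
  (1 < n)%N -> is_mult_order u a n ->
  (a ^ k %% n = 1 <-> u %| k)%N.
Proof.
move=> n_gt1 [u_gt0 a_u u_min].
have a_ku j : (a ^ (j * u) %% n = 1)%N.
  by rewrite mulnC expnM -modnXm a_u (modn_small n_gt1) exp1n modn_small.
have -> : (a ^ k %% n = a ^ (k %% u) %% n)%N.
  by rewrite {1}(divn_eq k u) expnD -modnMml a_ku mul1n.
split=> [a_r | /eqP ->]; last by rewrite expn0 modn_small.
rewrite /dvdn; apply: contraTT (ltn_pmod k u_gt0); rewrite -leqNgt => r_gt0.
by apply: u_min; rewrite ?lt0n // a_r modn_small.
Qed.

Lemma expn_mod4 (a d : nat) : odd a ->
  (a ^ d %% 4 = if (a %% 4 == 3) && odd d then 3 else 1)%N.
Proof.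
move=> a_odd; rewrite -modnXm.
have [->|->] : (a %% 4 = 1 \/ a %% 4 = 3)%N by lia.
  by rewrite exp1n.
elim: d => [|d IHd] //=.
by rewrite expnS -modnMmr IHd; case: odd.
Qed.

(* The residues q for which the q-th power map fixes z4 (w + w^-1), see     *)
(* zeta_sum_pow_fixed below.                                               *)
Definition stab_mod (q m : nat) : Prop :=
  ((q %% 4 = 1 /\ (q %% (2 * m) = 1 \/ q %% (2 * m) = 2 * m - 1)) \/
   (q %% 4 = 3 /\ (q %% (2 * m) = m + 1 \/ q %% (2 * m) = m - 1)))%N.

(* Every such residue squares to 1 modulo 2m (for m + 1 and m - 1, which  *)
(* are odd, m is even).                                                    *)
Lemma stab_mod_sq {q m : nat} : odd q -> (3 <= m)%N -> stab_mod q m ->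
  (q ^ 2 %% (2 * m) = 1)%N.
Proof.
move=> q_odd m_ge3 q_stab; rewrite -modnXm.
have r_odd : odd (q %% (2 * m)) by rewrite odd_mod // oddM.
suff [c ->] : exists c, ((q %% (2 * m)) ^ 2 = c * (2 * m) + 1)%N.
  by rewrite modnMDl modn_small //; lia.
rewrite /stab_mod in q_stab.
move: (q %% (2 * m))%N r_odd q_stab => r r_odd [[_ [->|->]] | [_ r_m]].
- by exists 0%N.
- by exists (2 * m - 2)%N; nia.
- have [k m_2k] : exists k, m = (2 * k)%N by exists m./2; lia.
  by case: r_m => ->; [exists (k + 1)%N | exists (k - 1)%N]; nia.
Qed.

Section StabilizerExponents.
Variables (p m u : nat).
Hypotheses (p_odd : odd p) (m_ge3 : (3 <= m)%N)
  (p_ord : is_mult_order u p (2 * m)).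

Let stab (d : nat) : Prop := stab_mod (p ^ d) m.
Let h : nat := (p ^ (u %/ 2) %% (2 * m))%N.

Let n_gt1 : (1 < 2 * m)%N. Proof. lia. Qed.
Let u_gt0 : (0 < u)%N. Proof. by case: p_ord. Qed.
Let p_pow4 (d : nat) : ((p ^ d %% 4 = 3 /\ p %% 4 = 3 /\ odd d) \/
  (p ^ d %% 4 = 1 /\ ~~ ((p %% 4 == 3) && odd d)))%N.
Proof. by rewrite expn_mod4 //; case: ifP; lia. Qed.

(* p ^ (2d) = 1 (mod 2m) by stab_mod_sq, hence u | 2d. *)
Lemma stab_dvd d : (0 < d)%N -> stab d -> (u %| 2 * d)%N.
Proof.
have pd_odd : odd (p ^ d) by rewrite oddX p_odd orbT.
move=> _ /(stab_mod_sq pd_odd m_ge3); rewrite -expnM mulnC.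
by move/(expn_mod_order _ n_gt1 p_ord).
Qed.

(* At multiples of u, p ^ d = 1 (mod 2m): only the residue mod 4 matters. *)
Lemma stab_mult {d} : (u %| d)%N -> (stab d <-> p ^ d %% 4 = 1)%N.
Proof.
move/(expn_mod_order d n_gt1 p_ord) => p_d; rewrite /stab /stab_mod p_d; lia.
Qed.

(* At d = u/2, p ^ d is not 1 (mod 2m), so p ^ d mod 2m must be h. *)
Lemma stab_half {d} : (2 * d = u)%N ->
  (stab d <-> (p ^ d %% 4 = 1 /\ h = 2 * m - 1) \/
              (p ^ d %% 4 = 3 /\ (h = m + 1 \/ h = m - 1)))%N.
Proof.
move=> u_2d; have d_u : (u %/ 2 = d)%N by lia.
have : (p ^ d %% (2 * m) <> 1)%N.
  by move/(expn_mod_order d n_gt1 p_ord)/dvdn_leq; lia.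
rewrite /stab /stab_mod /h d_u; lia.
Qed.

Lemma least_stab_half :
  [\/ [&& p %% 4 == 1, ~~ odd u & h == 2 * m - 1]%N,
      [&& p %% 4 == 3, u %% 4 == 0 & h == 2 * m - 1]%N
    | [&& p %% 4 == 3, u %% 4 == 2 & (h == m + 1) || (h == m - 1)]%N] ->
  least_pos stab (u %/ 2).
Proof.
move=> cases; have u_even : ~~ odd u by case: cases => /and3P[]; lia.
have u_half : (2 * (u %/ 2) = u)%N by lia.
apply: least_half stab_dvd u_even _ => //; apply/(stab_half u_half).
have := p_pow4 (u %/ 2); case: cases => /and3P[]; lia.
Qed.

Lemma least_stab_full :
  [\/ [&& p %% 4 == 1, ~~ odd u & h != 2 * m - 1]%N,
      (p %% 4 == 1)%N && odd u,
      [&& p %% 4 == 3, u %% 4 == 0 & h != 2 * m - 1]%N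
    | [&& p %% 4 == 3, u %% 4 == 2 & (h != m + 1) && (h != m - 1)]%N] ->
  least_pos stab u.
Proof.
move=> cases; apply: least_full stab_dvd _ _ => //.
  apply/stab_mult => //; have := p_pow4 u.
  by case: cases => [/and3P[]|/andP[]|/and3P[]|/and3P[]]; lia.
move=> d u_2d /(stab_half u_2d); have := p_pow4 d.
by case: cases => [/and3P[]|/andP[]|/and3P[]|/and3P[]]; lia.
Qed.

Lemma least_stab_double : (p %% 4 == 3)%N && odd u -> least_pos stab (2 * u).
Proof.
case/andP=> p3 u_odd; apply: least_double stab_dvd _ _ _ => //.
  by apply/stab_mult; [apply: dvdn_mull | have := p_pow4 (2 * u); lia].
by move/(stab_mult (dvdnn u)); have := p_pow4 u; lia.
Qed.

End StabilizerExponents.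

Lemma addr_inv_eq (F : fieldType) (a b : F) : a != 0 -> b != 0 ->
  (a + a^-1 == b + b^-1) = (a == b) || (a == b^-1).
Proof.
move=> a_neq0 b_neq0.
have factor : a + a^-1 - (b + b^-1) = (a - b) * (1 - (a * b)^-1).
  by field; rewrite b_neq0 a_neq0.
rewrite -subr_eq0 factor mulf_eq0 !subr_eq0 [1 == _]eq_sym invr_eq1.
congr (_ || _); apply/eqP/eqP => [ab1 | ->]; last by rewrite mulVf.
by rewrite -(mulfK b_neq0 a) ab1 mul1r.
Qed.

Lemma prim_root_half {R : idomainType} {n : nat} {w : R} : (0 < n)%N ->
  (2 * n).-primitive_root w -> w ^+ n = -1.
Proof.
move=> n_gt0 w_prim; have : (w ^+ n) ^+ 2 == 1.
  by rewrite -exprM mulnC prim_expr_order.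
rewrite sqrf_eq1 => /orP [/eqP w_n1|/eqP //]; exfalso.
have := eq_prim_root_expr w_prim n 0; rewrite w_n1 expr0 eqxx mod0n.
by rewrite modn_small ?eqn0Ngt ?n_gt0 //; lia.
Qed.

Lemma prim_root_neq0 {R : idomainType} {n : nat} {w : R} : (0 < n)%N ->
  n.-primitive_root w -> w != 0.
Proof.
move=> n_gt0 w_prim; apply/eqP => w0; have := prim_expr_order w_prim.
by rewrite w0 expr0n eqn0Ngt n_gt0 /= => /eqP; rewrite eq_sym oner_eq0.
Qed.

Lemma prim_root4_cube {R : idomainType} {z4 : R} :
  4.-primitive_root z4 -> z4 ^+ 3 = - z4.
Proof.
by move=> z4_prim; rewrite exprS (@prim_root_half _ 2 _ isT z4_prim) mulrN1.
Qed.

Lemma prim_root4_opp {R : idomainType} {z4 : R} :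
  4.-primitive_root z4 -> 4.-primitive_root (- z4).
Proof.
move=> z4_prim; rewrite -(prim_root4_cube z4_prim).
by rewrite (prim_root_exp_coprime _ z4_prim).
Qed.

(* The key computation: for q an odd power of the characteristic,        *)
(* (z4 (w + w^-1)) ^ q = z4 ^ (q mod 4) (w ^ q + w ^ -q), which equals     *)
(* z4 (w + w^-1) iff w ^ q is w or w^-1 (q = 1 mod 4), resp. -w or -w^-1   *)
(* (q = 3 mod 4); since -1 = w ^ m this is exactly stab_mod q m.           *)
Lemma zeta_sum_pow_fixed (L : fieldType) (m q : nat) (z4 w : L) :
  [pchar L].-nat q -> odd q -> (3 <= m)%N ->
  4.-primitive_root z4 -> (2 * m).-primitive_root w ->
  (z4 * (w + w^-1)) ^+ q = z4 * (w + w^-1) <-> stab_mod q m.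
Proof.
move=> q_pchar q_odd m_ge3 z4_prim w_prim; set N := (2 * m)%N.
have w_neq0 : w != 0 by apply: prim_root_neq0 w_prim; lia.
have z4_neq0 : z4 != 0 by apply: prim_root_neq0 z4_prim.
have wq_neq0 : w ^+ q != 0 by rewrite expf_neq0.
have w_m : w ^+ m = -1 by apply: prim_root_half w_prim; lia.
have w_inv : w^-1 = w ^+ (N - 1).
  apply: (mulfI w_neq0); rewrite divff // -exprS -(prim_expr_order w_prim).
  by congr (_ ^+ _); lia.
have w_pow j : (w ^+ q == w ^+ j) = (q %% N == j %% N)%N.
  exact: eq_prim_root_expr w_prim q j.
have -> : (z4 * (w + w^-1)) ^+ q = z4 ^+ (q %% 4) * (w ^+ q + (w ^+ q)^-1).
  by rewrite exprMn (prim_expr_mod z4_prim) exprDn_pchar // exprVn.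
rewrite [X in X <-> _](rwP eqP) /stab_mod.
have [q4|q4] : (q %% 4 = 1 \/ q %% 4 = 3)%N by lia.
- rewrite q4 expr1 (inj_eq (mulfI z4_neq0)) addr_inv_eq // w_inv.
  rewrite -[X in (_ == X) || _](expr1 w) !w_pow.
  by rewrite (@modn_small 1) ?(@modn_small (N - 1)) /N; lia.
- rewrite q4 (prim_root4_cube z4_prim) mulNr eqr_oppLR -mulrN.
  rewrite (inj_eq (mulfI z4_neq0)) opprD -invrN.
  rewrite addr_inv_eq ?oppr_eq0 // invrN w_inv.
  have -> : - w = w ^+ (m + 1) by rewrite exprD w_m expr1 mulN1r.
  have -> : - w ^+ (N - 1) = w ^+ ((m - 1) + N).
    have -> : (m - 1 + N = m + (N - 1))%N by rewrite /N; lia.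
    by rewrite exprD w_m mulN1r.
  by rewrite !w_pow modnDr (@modn_small (m + 1)) ?(@modn_small (m - 1)) /N; lia.
Qed.

Lemma exprz_add_opp (R : unitRingType) (z : R) (s : int) :
  z ^ s + z ^ (- s) = z ^+ `|s|%N + (z ^+ `|s|%N)^-1.
Proof.
by case: s => n; rewrite ?NegzE -invr_expz ?opprK // addrC.
Qed.

(* For s coprime to m, z ^ s + z ^ -s = +-(w + w^-1) for a primitive     *)
(* 2m-th root w: w = z ^ |s| if s is odd, and w = z ^ (|s| + m) otherwise  *)
(* (then m is odd and z ^ m = -1).                                         *)
Lemma exprz_add_opp_prim {L : fieldType} {m : nat} {z : L} {s : int} :
  (0 < m)%N -> (2 * m).-primitive_root z -> coprimez s m ->
  exists2 w, (2 * m).-primitive_root w &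
    z ^ s + z ^ (- s) = w + w^-1 \/ z ^ s + z ^ (- s) = - (w + w^-1).
Proof.
move=> m_gt0 z_prim; rewrite /coprimez /gcdz /= exprz_add_opp.
set n := `|s|%N => /eqP [] n_m.
have n_m' : coprime n m by rewrite /coprime n_m.
have [n_odd | n_even] := boolP (odd n).
  exists (z ^+ n); last by left.
  by rewrite (prim_root_exp_coprime _ z_prim) coprimeMr coprimen2 n_odd.
have m_odd : odd m.
  apply/negPn/negP => m_even.
  have : (2 %| gcdn n m)%N by rewrite dvdn_gcd !dvdn2 n_even m_even.
  by rewrite n_m.
exists (z ^+ (n + m)); last first.
  right; rewrite exprD (prim_root_half m_gt0 z_prim) mulrN1.
  by rewrite invrN opprD !opprK.
rewrite (prim_root_exp_coprime _ z_prim) coprimeMr coprimen2 oddD.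
rewrite (negbTE n_even) m_odd coprime_sym /coprime gcdnDr.
by rewrite -/(coprime m n) coprime_sym.
Qed.

Section PrimeFieldExtension.
Variables (p : nat) (L : fieldExtType 'F_p).
Hypothesis p_prime : prime p.

Lemma pchar_ext : p \in [pchar L].
Proof. by rewrite (pchar_lalg L) pchar_Fp. Qed.

Lemma prime_subfield_fixed (c : L) (d : nat) : c \in 1%VS -> c ^+ (p ^ d) = c.
Proof.
rewrite (Fermat's_little_theorem 1%AS) /= dimv1 expn1 card_Fp // => /eqP c_p.
by elim: d => [|d IHd]; rewrite ?expr1 // expnSr exprM IHd.
Qed.

Lemma horner_frobenius (q : {poly L}) (y : L) (d : nat) :
  q \is a polyOver 1%VS -> q.[y] ^+ (p ^ d) = q.[y ^+ (p ^ d)].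
Proof.
move=> q_F; elim: d => [|d IHd]; first by rewrite !expr1.
rewrite expnSr !exprM IHd -!(pFrobenius_autE pchar_ext) -horner_map /=.
rewrite map_poly_id // => c /(nthP 0) [i _ <-].
rewrite pFrobenius_autE -[X in _ ^+ X]expn1.
by rewrite prime_subfield_fixed ?(polyOverP q_F).
Qed.

Lemma adjoin_frobenius_fixed (x : L) (d : nat) : x ^+ (p ^ d) = x ->
  {in <<1; x>>%VS, forall y, y ^+ (p ^ d) = y}.
Proof.
move=> x_fixed y /Fadjoin_poly_eq <-.
by rewrite horner_frobenius ?x_fixed ?Fadjoin_polyOver.
Qed.

(* p ^ deg elements of F_p(x) satisfy y ^ (p ^ deg) = y (Fermat), and if  *)
(* x ^ (p ^ d) = x they are all roots of X ^ (p ^ d) - X.                 *)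
Lemma minpoly_degree_least (x : L) :
  least_pos (fun d => x ^+ (p ^ d) = x) (minpoly_degree x).
Proof.
have dim_x : \dim <<1; x>> = minpoly_degree x.
  by rewrite (dim_Fadjoin (1%AS : {subfield L})) dimv1 muln1.
split=> [|| d d_gt0 x_fixed]; first by rewrite /minpoly_degree /adjoin_degree.
  have := Fermat's_little_theorem <<1; x>>%AS x.
  by rewrite memv_adjoin /= card_Fp // dim_x => /esym/eqP.
pose N := (p ^ d)%N; pose V : {vspace finvect_type L} := <<1; x>>%VS.
have N_gt1 : (1 < N)%N by rewrite -(expn0 p) ltn_exp2l ?prime_gt1.
suff : (#|V| <= N)%N.
  by rewrite card_vspace card_Fp // dim_x leq_exp2l ?prime_gt1.
have XN_neq0 : 'X^N - 'X != 0 :> {poly L}.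
  by rewrite -size_poly_eq0 size_polyDl ?size_polyXn ?size_polyN ?size_polyX.
have V_roots : all (root ('X^N - 'X)) (enum V).
  apply/allP => y; rewrite mem_enum => y_V.
  by rewrite /root !hornerE (adjoin_frobenius_fixed _ _ x_fixed) ?subrr.
have := max_poly_roots XN_neq0 V_roots (enum_uniq _).
by rewrite cardE size_polyDl ?size_polyXn ?size_polyN ?size_polyX ?ltnS.
Qed.

End PrimeFieldExtension.

Lemma zeta_sum_degree {p m : nat} {s : int} {L : fieldExtType 'F_p} {z4 z : L} :
  prime p -> odd p -> (3 <= m)%N ->
  4.-primitive_root z4 -> (2 * m).-primitive_root z -> coprimez s m ->
  forall T, least_pos (fun d => stab_mod (p ^ d) m) T ->
  minpoly_degree (z4 * (z ^ s + z ^ (- s))) = T.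
Proof.
move=> p_prime p_odd m_ge3 z4_prim z_prim s_m T T_least.
have [w w_prim sum_w] := exprz_add_opp_prim (ltnW (ltnW m_ge3)) z_prim s_m.
have [z4' z4'_prim ->] : exists2 z4', 4.-primitive_root z4' &
    z4 * (z ^ s + z ^ (- s)) = z4' * (w + w^-1).
  case: sum_w => ->; first by exists z4.
  by exists (- z4); rewrite ?(prim_root4_opp z4_prim) ?mulrN ?mulNr.
apply: least_pos_unique T_least => [d|]; last exact: minpoly_degree_least.
apply: zeta_sum_pow_fixed; rewrite ?oddX ?p_odd ?orbT //.
by rewrite (eq_pnat _ (pcharf_eq (pchar_ext p L p_prime))) pnatX pnat_id.
Qed.

Theorem mainTheorem15 (p m u : nat) (s : int)
  (L : fieldExtType 'F_p) (z4 z : L) :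
  prime p -> (2 < p)%N -> (3 <= m)%N -> coprime p m ->
  is_mult_order u p (2 * m) ->
  4.-primitive_root z4 -> (2 * m)%N.-primitive_root z ->
  coprimez s m ->
  let delta := minpoly_degree (z4 * (z ^ s + z ^ (- s))) in
  let h := (p ^ (u %/ 2) %% (2 * m))%N in
  [/\ ([\/ [&& p %% 4 == 1, ~~ odd u & h == 2 * m - 1]%N,
           [&& p %% 4 == 3, u %% 4 == 0 & h == 2 * m - 1]%N
         | [&& p %% 4 == 3, u %% 4 == 2 & (h == m + 1) || (h == m - 1)]%N]
         -> delta = (u %/ 2)%N),
      ([\/ [&& p %% 4 == 1, ~~ odd u & h != 2 * m - 1]%N,
           (p %% 4 == 1)%N && odd u,
           [&& p %% 4 == 3, u %% 4 == 0 & h != 2 * m - 1]%N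
         | [&& p %% 4 == 3, u %% 4 == 2 & (h != m + 1) && (h != m - 1)]%N]
         -> delta = u)
    & ((p %% 4 == 3)%N && odd u -> delta = (2 * u)%N)].
Proof.
move=> p_prime p_gt2 m_ge3 _ p_ord z4_prim z_prim s_m delta h.
have p_odd : odd p by case: (even_prime p_prime) p_gt2 => [->|].
have degree := zeta_sum_degree p_prime p_odd m_ge3 z4_prim z_prim s_m.
split=> [/(least_stab_half _ _ _ p_odd m_ge3 p_ord)
        |/(least_stab_full _ _ _ p_odd m_ge3 p_ord)
        |/(least_stab_double _ _ _ p_odd m_ge3 p_ord)]; exact: degree.
Qed.
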